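(* Let $F$ be a $4$-regular graph, let $D$ be a directed version of $F$, let $\mathbf o$ be a transitional orientation of $F$, let $\Gamma$ be a set of closed walks of $F$, and let $P$ be a circuit partition of $F$. Then $\mathrm{CM}(\mathrm{Tch}(P),\pi_P(\Gamma),\mathrm{Tch}_{\mathbf o}(P))$ is equal to $\mathrm{CM}(F,\Gamma,D)\cdot\Delta_{D,\mathbf o}|_{\tau(P)}$, after relabeling each row index $\pi_P(W)$ of the former matrix by $W$.
   Context: Graphs: $G=(V,H,E,\epsilon)$ with finite sets of vertices $V$ and half-edges $H$, a partition $E$ of $H$ into unordered pairs (edges), and $\epsilon:H\to V$; loops and multiple edges allowed. A directed version orders each edge as (tail, head). A single transition is an unordered pair of distinct half-edges incident with a common vertex; a directed single transition is such an ordered pair. A closed walk is a sequence $((h_1,h_2),\dots,(h_{n-1},h_n))$ of directed single transitions with $\{h_2,h_3\},\{h_4,h_5\},\dots,\{h_n,h_1\}$ edges, up to cyclic shift. For a directed version $D$ and closed walk $W$, $\sigma(D,W)\in\mathbb Z^{E}$ counts, at each edge $e$, traversals of $e$ along its direction minus traversals against it. A circuit is a nonempty closed walk using each half-edge at most once, with orientation forgotten. For a (multi)set $\Gamma$ of closed walks of $G$ and a directed version $D$, the cycle matrix $\mathrm{CM}(G,\Gamma,D)$ is the $\Gamma\times E(G)$ integer matrix whose row indexed by $W$ is $\sigma(D,W)$. $F$ is $4$-regular if every vertex is incident with exactly $4$ half-edges. A transition at $v$ is a partition of the four half-edges at $v$ into two single transitions; $\mathfrak T(F)$ is the set of transitions.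 A circuit partition $P$ is a set of circuits of $F$ such that every half-edge lies in exactly one single transition of exactly one circuit of $P$; $\tau(P)$ is the set of transitions both of whose single transitions occur in circuits of $P$. The touch-graph $\mathrm{Tch}(P)$ has vertex set $P$, half-edge set the set of single transitions occurring in circuits of $P$, edge set $\tau(P)$, and maps each single transition to the circuit containing it. A transitional orientation $\mathbf o$ assigns to each $t\in\mathfrak T(F)$ one of its two single transitions $\mathbf o(t)$; $\mathrm{Tch}_{\mathbf o}(P)$ is the directed version of $\mathrm{Tch}(P)$ in which each edge $t$ has head $\mathbf o(t)$ and tail the other single transition of $t$. For a closed walk $W$ of $F$, $\pi_P(W)$ is obtained by replacing each directed single transition $(h,h')$ of $W$ by $(s,s')$, where $s,s'$ are the single transitions of circuits of $P$ containing $h,h'$, and deleting pairs with $s=s'$; it is a closed walk of $\mathrm{Tch}(P)$ in which each remaining $(s,s')$ traverses edge $\{s,s'\}$ from half-edge $s$ to half-edge $s'$. $\pi_P(\Gamma)$ is the multiset $\{\pi_P(W):W\in\Gamma\}$. The edge-transition incidence matrix $\Delta_{D,\mathbf o}$ is the $E(F)\times\mathfrak T(F)$ matrix over $\mathbb Q$ whose $(e,t)$ entry is $1$ if $e\cap\mathbf o(t)=\{h\}$ with $h$ the tail of $e$ in $D$, $-1$ if $e\cap\mathbf o(t)=\{h\}$ with $h$ the head of $e$ in $D$, and $0$ otherwise; $A|_Y$ denotes the restriction to the columns in $Y$. *)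

From mathcomp Require Import all_boot all_order all_algebra.
Set Implicit Arguments. Unset Strict Implicit. Unset Printing Implicit Defensive.
Import GRing.Theory Num.Theory.
Local Open Scope ring_scope.

(* A directed version is given by a head map  hd : {set H} -> H  with hd e \in e
   (the tail is the other half-edge of e). *)

Section Defs.
Variables (V H : finType) (eps : H -> V).

Definition is_graph (E : {set {set H}}) : Prop :=
  partition E [set: H] /\ (forall e, e \in E -> #|e| = 2%N).

Definition is_directed_version (E : {set {set H}}) (D : {set H} -> H) : Prop :=
  forall e, e \in E -> D e \in e.

Definition four_regular : Prop :=
  forall v : V, #|[set h | eps h == v]| = 4%N.

Definition single_at (v : V) (s : {set H}) : bool :=
  (#|s| == 2%N) && [forall h in s, eps h == v].

Definition is_transition (t : {set {set H}}) : bool :=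
  [exists v : V, exists s1 : {set H}, exists s2 : {set H},
     [&& t == [set s1; s2], single_at v s1, single_at v s2,
         [disjoint s1 & s2] & s1 :|: s2 == [set h | eps h == v]]].

Definition transitions : {set {set {set H}}} := [set t | is_transition t].

(* A closed walk ((h1,h2),...,(h_{n-1},h_n)) is represented by the sequence of
   its directed single transitions (one representative of the cyclic class).
   Its edge traversals are (h2,h3), (h4,h5), ..., (hn,h1). *)
Definition walk_trav (W : seq (H * H)) : seq (H * H) :=
  zip (map snd W) (rot 1 (map fst W)).

Definition is_closed_walk (E : {set {set H}}) (W : seq (H * H)) : Prop :=
  (forall p, p \in W -> p.1 != p.2 /\ eps p.1 = eps p.2) /\
  (forall p, p \in walk_trav W -> [set p.1; p.2] \in E).

Definition half_edges_of (W : seq (H * H)) : seq H :=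
  flatten [seq [:: p.1; p.2] | p <- W].

Definition is_circuit (E : {set {set H}}) (C : seq (H * H)) : Prop :=
  C != [::] /\ is_closed_walk E C /\ uniq (half_edges_of C).

(* A circuit partition, given as a list of circuits (one representative each):
   every half-edge lies in exactly one single transition of exactly one circuit. *)
Definition is_circuit_partition (E : {set {set H}}) (P : seq (seq (H * H))) : Prop :=
  (forall C, C \in P -> is_circuit E C) /\
  (forall h : H,
     (\sum_(C <- P) count (fun p : H * H => (p.1 == h) || (p.2 == h)) C)%N = 1%N).

Definition P_singles (P : seq (seq (H * H))) : {set {set H}} :=
  [set [set p.1; p.2] | p in flatten P].

Definition P_single_of (P : seq (seq (H * H))) (h : H) : {set H} :=
  odflt set0 [pick s in P_singles P | h \in s].

Definition tau (P : seq (seq (H * H))) : {set {set {set H}}} :=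
  [set t in transitions | t \subset P_singles P].

Definition is_trans_orientation (o : {set {set H}} -> {set H}) : Prop :=
  forall t, is_transition t -> o t \in t.

(* pi_P(W), given by its sequence of edge traversals (s,s') in Tch(P) *)
Definition pi_P (P : seq (seq (H * H))) (W : seq (H * H)) : seq ({set H} * {set H}) :=
  [seq (P_single_of P p.1, P_single_of P p.2) |
     p <- W & P_single_of P p.1 != P_single_of P p.2].

Definition Delta (D : {set H} -> H) (o : {set {set H}} -> {set H})
    (e : {set H}) (t : {set {set H}}) : rat :=
  if #|e :&: o t| == 1%N then
    (if [pick h in e :&: o t] is Some h then
       (if h == D e then -1 else 1) else 0)
  else 0.

End Defs.

(* Generic sigma(D,W)(e) for a graph with half-edge type K, a directed version
   given by its head map hd, and a closed walk given by its edge traversals: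
   traversals of e along its direction (tail -> head) minus those against it. *)
Definition sigma {K : finType} (hd : {set K} -> K) (trav : seq (K * K))
    (e : {set K}) : int :=
  \sum_(p <- trav | [set p.1; p.2] == e) (if p.2 == hd e then 1 else -1).

(* Cycle matrix CM(G, Gamma, D): entry in row i (the i-th walk of Gamma, given
   by its traversals; i < size Gamma) and column e. *)
Definition CM {K : finType} (Gamma : seq (seq (K * K))) (hd : {set K} -> K)
    (i : nat) (e : {set K}) : int :=
  sigma hd (nth [::] Gamma i) e.

From mathcomp Require Import all_boot all_order all_algebra.
Import GRing.Theory Num.Theory.
Local Open Scope ring_scope.
Set Implicit Arguments. Unset Strict Implicit.

(* Fix t in tau(P) and let O = o(t).  A directed single transition (a, b) of a
   walk contributes [b \in O] - [a \in O] to the t-entry of sigma on the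
   touch-graph: transitions inside one circuit of P are erased by pi_P, and a
   step between the two single transitions of t crosses the edge t towards its
   head exactly when it enters O.  On the other side Delta(e, t) is
   [tail e \in O] - [head e \in O], so the row of CM(F, Gamma, D) times the
   column t of Delta sums [h \in O] - [h' \in O] over the edge traversals
   (h, h') of the walk; as the walk is closed, this is a rearrangement of the
   same sum over its transitions. *)

Lemma setI_set2 (T : finType) (a b : T) (A : {set T}) :
  [set a; b] :&: A
  = (if a \in A then [set a] else set0) :|: (if b \in A then [set b] else set0).
Proof.
apply/setP => x; rewrite in_setI in_set2 in_setU andb_orl.
have eq_in y : (x == y) && (x \in A) = (x == y) && (y \in A) by case: eqP => // ->.
by rewrite !eq_in; case: (a \in A); case: (b \in A); rewrite ?inE ?andbT ?andbF ?orbF.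
Qed.

Section Incidence.
Variables (H : finType) (D : {set H} -> H) (o : {set {set H}} -> {set H}).

Lemma Delta_tail_head (a b : H) t : a != b -> D [set a; b] = b ->
  Delta D o [set a; b] t = (a \in o t)%:R - (b \in o t)%:R.
Proof.
move=> neq_ab Db; rewrite /Delta Db setI_set2.
case: (a \in o t); case: (b \in o t); rewrite ?set0U ?setU0.
- by rewrite cards2 neq_ab /= subrr.
- by rewrite cards1 pick_set1 (negbTE neq_ab) subr0.
- by rewrite cards1 pick_set1 !eqxx sub0r.
- by rewrite cards0 subrr.
Qed.

Lemma signed_Delta (a b : H) t : a != b -> D [set a; b] \in [set a; b] ->
  (if b == D [set a; b] then 1 else -1) * Delta D o [set a; b] t
  = (a \in o t)%:R - (b \in o t)%:R.
Proof.
move=> neq_ab; rewrite in_set2 => /orP[/eqP Da | /eqP Db].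
- rewrite Da eq_sym (negbTE neq_ab) mulN1r setUC Delta_tail_head ?opprB //.
    by rewrite eq_sym.
  by rewrite setUC.
- by rewrite Db eqxx mul1r Delta_tail_head.
Qed.

End Incidence.

Lemma sum_sigma_mul (K : finType) (R : pzRingType) (E : {set {set K}})
    (hd : {set K} -> K) (trav : seq (K * K)) (f : {set K} -> R) :
  {in trav, forall p, [set p.1; p.2] \in E} ->
  \sum_(e in E) (sigma hd trav e)%:~R * f e
  = \sum_(p <- trav) (if p.2 == hd [set p.1; p.2] then 1 else -1) * f [set p.1; p.2].
Proof.
move=> travE; rewrite /sigma.
under eq_bigr => e _ do rewrite rmorph_sum mulr_suml.
rewrite (exchange_big_dep xpredT) //=; apply: eq_big_seq => p /travE pE.
rewrite (big_pred1 [set p.1; p.2]) => [|e]; last first.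
  by rewrite /= eq_sym; case: eqP => [->|]; rewrite ?andbT ?andbF.
by case: ifP; rewrite ?rmorphN1 ?rmorph1.
Qed.

Lemma sum_walk_trav (H : finType) (R : zmodType) (F : H -> R) (W : seq (H * H)) :
  \sum_(p <- walk_trav W) (F p.1 - F p.2) = \sum_(p <- W) (F p.2 - F p.1).
Proof.
rewrite /walk_trav !sumrB -!(big_map fst xpredT) -!(big_map snd xpredT).
set trav := zip _ _; rewrite -/(unzip1 trav) -/(unzip2 trav) {}/trav.
rewrite unzip1_zip ?unzip2_zip ?size_rot ?size_map //.
by rewrite [X in _ - X](perm_big (map fst W)) // perm_rot.
Qed.

Lemma count_eq1_inj (T : eqType) (a : pred T) (s : seq T) :
  count a s = 1%N -> {in s &, forall x y, a x -> a y -> x = y}.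
Proof.
rewrite -size_filter => s_a1 x y xs ys ax ay.
have : x \in filter a s by rewrite mem_filter ax.
have : y \in filter a s by rewrite mem_filter ay.
by case: (filter a s) s_a1 => [|z []] //= _; rewrite !inE => /eqP -> /eqP ->.
Qed.

Lemma transition_split (V H : finType) (eps : H -> V) (t : {set {set H}}) O :
  is_transition eps t -> O \in t ->
  exists v O', t = [set O; O'] /\ O :|: O' = [set h | eps h == v].
Proof.
case/existsP=> v /existsP[s1 /existsP[s2 /and5P[/eqP tE _ _ _ /eqP cover_v]]].
rewrite tE in_set2 => /orP[] /eqP ->; exists v.
- by exists s2.
- by exists s1; rewrite [s2 :|: s1]setUC [[set s2; s1]]setUC.
Qed.

Section CircuitPartition.
Variables (V H : finType) (eps : H -> V) (P : seq (seq (H * H))).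
Hypothesis P_cover : forall h : H,
  (\sum_(C <- P) count (fun p : H * H => (p.1 == h) || (p.2 == h)) C)%N = 1%N.

Local Notation sgl := (P_single_of P).

Lemma P_singles_unique (h : H) (s s' : {set H}) :
  s \in P_singles P -> s' \in P_singles P -> h \in s -> h \in s' -> s = s'.
Proof.
case/imsetP => p pP ->; case/imsetP => q qP ->; rewrite !in_set2 => hp hq.
have count_h : count (fun p : H * H => (p.1 == h) || (p.2 == h)) (flatten P) = 1%N.
  by rewrite count_flatten sumnE big_map P_cover.
by rewrite (count_eq1_inj count_h pP qP) //= ![_ == h]eq_sym.
Qed.

Lemma P_single_ofE (h : H) (s : {set H}) :
  s \in P_singles P -> (h \in s) = (sgl h == s).
Proof.
have [p pP hp] : exists2 p, p \in flatten P & (p.1 == h) || (p.2 == h).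
  by apply/hasP; rewrite has_count count_flatten sumnE big_map P_cover.
have p_single : [set p.1; p.2] \in P_singles P by apply: imset_f.
have : h \in sgl h /\ sgl h \in P_singles P.
  rewrite /P_single_of; case: pickP => [s' /andP[-> ->] //|/(_ [set p.1; p.2])].
  by rewrite p_single in_set2 ![h == _]eq_sym hp.
case=> h_sgl sgl_P sP; apply/idP/eqP => [hs|<-] //.
exact: P_singles_unique sgl_P sP h_sgl hs.
Qed.

Lemma pi_P_step_sign (v : V) (t : {set {set H}}) (O O' : {set H}) (a b : H) :
  O \in P_singles P -> O' \in P_singles P -> t = [set O; O'] ->
  O :|: O' = [set h | eps h == v] -> eps a = eps b ->
  (if (sgl a != sgl b) && ([set sgl a; sgl b] == t)
   then (if sgl b == O then 1 else -1) else 0 : int)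
  = (b \in O)%:R - (a \in O)%:R.
Proof.
move=> OP O'P -> cover_v eps_ab; rewrite !(P_single_ofE _ OP).
have sgl_at_v h : eps h = v -> (sgl h == O) || (sgl h == O').
  by move=> /eqP; rewrite -!P_single_ofE // -in_setU cover_v inE.
have at_v h : sgl h = O -> eps h = v.
  move=> /eqP; rewrite -P_single_ofE // => hO.
  have : h \in O :|: O' by rewrite in_setU hO.
  by rewrite cover_v inE => /eqP.
(* If exactly one of a, b lies in O, both are at v, so the other lies in O'. *)
have [sbO | sbO] := eqVneq (sgl b) O; have [saO | saO] := eqVneq (sgl a) O.
- by rewrite saO sbO eqxx.
- have := sgl_at_v a (etrans eps_ab (at_v b sbO)); rewrite (negbTE saO) => /eqP saO'.
  by rewrite saO' sbO setUC eqxx andbT -saO' saO subr0.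
- have := sgl_at_v b (etrans (esym eps_ab) (at_v a saO)); rewrite (negbTE sbO) => /eqP sbO'.
  by rewrite saO sbO' eqxx andbT -sbO' eq_sym sbO sub0r.
- case: ifP => // /andP[_ /eqP sab].
  by have := set21 O O'; rewrite -sab in_set2 eq_sym (negbTE saO) eq_sym (negbTE sbO).
Qed.

Lemma sigma_pi_P (o : {set {set H}} -> {set H}) (W : seq (H * H)) t :
  {in W, forall p, eps p.1 = eps p.2} -> t \in tau eps P -> o t \in t ->
  sigma o (pi_P P W) t = \sum_(p <- W) ((p.2 \in o t)%:R - (p.1 \in o t)%:R).
Proof.
move=> eps_W; rewrite inE => /andP[]; rewrite inE => t_tr t_sub ot_t.
have [v [O' [tE cover_v]]] := transition_split t_tr ot_t.
have ot_P : o t \in P_singles P by apply: (subsetP t_sub).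
have O'_P : O' \in P_singles P by apply: (subsetP t_sub); rewrite tE set22.
rewrite /sigma /pi_P big_map big_filter_cond big_mkcond /=.
apply: eq_big_seq => p /eps_W eps_p.
exact: pi_P_step_sign ot_P O'_P tE cover_v eps_p.
Qed.

End CircuitPartition.

Theorem mainTheorem8 (V H : finType) (eps : H -> V) (E : {set {set H}})
  (D : {set H} -> H) (o : {set {set H}} -> {set H})
  (Gamma : seq (seq (H * H))) (P : seq (seq (H * H))) :
  is_graph E ->
  four_regular eps ->
  is_directed_version E D ->
  is_trans_orientation eps o ->
  (forall W, W \in Gamma -> is_closed_walk eps E W) ->
  is_circuit_partition eps E P ->
  forall (i : nat) (t : {set {set H}}), (i < size Gamma)%N -> t \in tau eps P ->
    ((CM [seq pi_P P W | W <- Gamma] o i t)%:~R : rat)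
    = \sum_(e in E)
        (CM [seq walk_trav W | W <- Gamma] D i e)%:~R * Delta D o e t.
Proof.
move=> [_ edge_card2] _ D_head o_orient Gamma_walks [_ P_cover] i t i_lt t_tau.
rewrite /CM !(nth_map [::]) //.
have [W_steps W_edges] := Gamma_walks _ (mem_nth [::] i_lt).
set W := nth [::] Gamma i.
have ot_t : o t \in t by apply: o_orient; move: t_tau; rewrite !inE => /andP[].
have W_eps : {in W, forall p, eps p.1 = eps p.2} by move=> p /W_steps[].
rewrite (sigma_pi_P P_cover W_eps t_tau ot_t) sum_sigma_mul // rmorph_sum.
under eq_bigr => p _ do rewrite rmorphB !rmorph_nat.
rewrite -(sum_walk_trav (fun h => (h \in o t)%:R)); apply: eq_big_seq => p /W_edges e_p.
rewrite signed_Delta ?D_head //.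
by apply/eqP => p12; move: (edge_card2 _ e_p); rewrite p12 setUid cards1.
Qed.
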